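(* Let $\mathbb{H}$ be a simple hypergraph of order $n$ with strong chromatic number $\chi'(\mathbb{H})=k'$. Then for all non-negative integers $h>k$, $$\lambda_{h,k}(\mathbb{H})\le k(n-k')+(k'-1)h.$$
   Context: A strong $t$-colouring of a hypergraph $\mathbb{H}=(V,E)$ is a partition $\{C_1,\dots,C_t\}$ of $V$ with $|C_i\cap e|\le 1$ for all $e\in E$ and all $i$; $\chi'(\mathbb{H})$ is the least such $t$. For non-negative integers $h>k$, an $L(h,k)$-colouring of $\mathbb{H}$ is a map $f:V\to\mathbb{Z}_{\ge 0}$ such that $|f(u)-f(v)|\ge h$ whenever $u\ne v$ lie in a common edge, and $|f(u)-f(v)|\ge k$ whenever there are edges $e_1\ni v$, $e_2\ni u$ with $(e_1\cap e_2)\setminus\{u,v\}\ne\emptyset$. The span is $\max f-\min f$; $\lambda_{h,k}(\mathbb{H})$ is the minimum span of an $L(h,k)$-colouring. A hypergraph is simple if no edge contains another and every edge has at least two vertices. *)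

From mathcomp Require Import all_boot.
From mathcomp Require Import boolp.
From mathcomp Require Import zify.

Set Implicit Arguments.
Unset Strict Implicit.
Unset Printing Implicit Defensive.

(* A hypergraph on a finite vertex type V is given by its edge set
   E : {set {set V}}.  Its order is #|V|. *)

Definition simple_hypergraph (V : finType) (E : {set {set V}}) : Prop :=
  (forall e1 e2, e1 \in E -> e2 \in E -> e1 != e2 -> ~~ (e1 \subset e2)) /\
  (forall e, e \in E -> 2 <= #|e|).

Definition strong_colouring (V : finType) (E : {set {set V}}) (t : nat)
    (c : V -> 'I_t) : Prop :=
  forall e, e \in E -> forall i : 'I_t, #|[set v in e | c v == i]| <= 1.

Definition strong_chromatic_number (V : finType) (E : {set {set V}}) (k' : nat) : Prop :=
  (exists c : V -> 'I_k', strong_colouring E c) /\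
  (forall t, t < k' -> ~ exists c : V -> 'I_t, strong_colouring E c).

Definition distn (a b : nat) : nat := (a - b) + (b - a).

Definition L_colouring (V : finType) (E : {set {set V}}) (h k : nat)
    (f : V -> nat) : Prop :=
  (forall u v, u != v -> (exists2 e, e \in E & (u \in e) && (v \in e)) ->
     h <= distn (f u) (f v)) /\
  (forall u v, u != v ->
     (exists e1 e2 w, [/\ e1 \in E, e2 \in E, v \in e1, u \in e2 &
        [/\ w \in e1, w \in e2, w != u & w != v]]) ->
     k <= distn (f u) (f v)).

Definition span (V : finType) (f : V -> nat) : nat :=
  \max_(v : V) f v - \big[minn/(\max_(v : V) f v)]_(v : V) f v.

Lemma L_colouring_exists (V : finType) (E : {set {set V}}) (h k : nat) :
  exists s, `[< exists f, L_colouring E h k f /\ span f = s >].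
Proof.
pose f := fun v : V => (h + k) * (enum_rank v : nat).
have Hd : forall u v, u != v -> h + k <= distn (f u) (f v).
  move=> u v huv; rewrite /distn /f.
  have : (enum_rank u : nat) != enum_rank v.
    by apply: contra huv => /eqP /val_inj /enum_rank_inj ->.
  move: (enum_rank u : nat) (enum_rank v : nat) => a b hab.
  have [hlt|hgt] : a < b \/ b < a by lia.
  - have -> : (h + k) * b - (h + k) * a = (h + k) * (b - a) by rewrite mulnBr.
    by apply: leq_trans (leq_addl _ _); rewrite leq_pmulr //; lia.
  - have -> : (h + k) * a - (h + k) * b = (h + k) * (a - b) by rewrite mulnBr.
    by apply: leq_trans (leq_addr _ _); rewrite leq_pmulr //; lia.
exists (span f); apply/asboolP; exists f; split => //; split.
- by move=> u v huv _; apply: leq_trans (Hd u v huv); apply: leq_addr.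
- by move=> u v huv _; apply: leq_trans (Hd u v huv); apply: leq_addl.
Qed.

Definition lambda_hk (V : finType) (E : {set {set V}}) (h k : nat) : nat :=
  ex_minn (L_colouring_exists E h k).

From mathcomp Require Import all_boot.
From mathcomp Require Import boolp zify.

Set Implicit Arguments.
Unset Strict Implicit.

(* Fix a strong colouring c with k' colours and list the vertices colour class
   by colour class, i.e. in increasing order of the key  c v * n + rank(v).
   Writing pos v for the position of v in this list, the labelling
       f v = k * pos v + (h - k) * c v
   increases by at least k between consecutive vertices and by at least h
   whenever the colour changes.  Any two vertices therefore get labels at
   distance >= k, and two vertices of a common edge, which a strong colouring
   separates, get labels at distance >= h: f is an L(h,k)-colouring.  Its
   labels lie in [0, k (n - 1) + (h - k) (k' - 1)], and since k' <= n (the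
   colouring by vertex ranks is strong) this is at most k (n - k') + (k' - 1) h. *)

Lemma distn_sym a b : distn a b = distn b a.
Proof. rewrite /distn; lia. Qed.

Lemma distn_ge a b d : a + d <= b -> d <= distn a b.
Proof. rewrite /distn; lia. Qed.

Lemma span_le_max (V : finType) (f : V -> nat) (m : nat) :
  (forall v, f v <= m) -> span f <= m.
Proof. by move=> fm; apply: leq_trans (leq_subr _ _) _; apply/bigmax_leqP. Qed.

Lemma lambda_hk_le_span (V : finType) (E : {set {set V}}) (h k : nat)
    (f : V -> nat) :
  L_colouring E h k f -> lambda_hk E h k <= span f.
Proof.
by move=> Lf; rewrite /lambda_hk; case: ex_minnP => m _; apply; apply/asboolP; exists f.
Qed.

Lemma strong_colouring_by_rank (V : finType) (E : {set {set V}}) :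
  strong_colouring E (@enum_rank V).
Proof.
move=> e _ i; rewrite -(cards1 (enum_val i)); apply: subset_leq_card.
by apply/subsetP => v; rewrite !inE => /andP [_ /eqP <-]; rewrite enum_rankK.
Qed.

Lemma strong_chromatic_number_le_order (V : finType) (E : {set {set V}}) k' :
  strong_chromatic_number E k' -> k' <= #|V|.
Proof.
move=> [_ kmin]; rewrite leqNgt; apply/negP => lt_V_k'.
by apply: (kmin _ lt_V_k'); exists (@enum_rank V); apply: strong_colouring_by_rank.
Qed.

Lemma strong_colouring_separates (V : finType) (E : {set {set V}}) t
    (c : V -> 'I_t) e u v :
  strong_colouring E c -> e \in E -> u \in e -> v \in e -> u != v -> c u != c v.
Proof.
move=> Sc eE ue ve uv; apply/negP => /eqP cuv.
have := Sc e eE (c u); apply/negP; rewrite -ltnNge.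
apply: (@leq_trans #|[set u; v]|); first by rewrite cards2 uv.
apply: subset_leq_card; apply/subsetP => w; rewrite !inE.
by case/orP => /eqP ->; rewrite ?ue ?ve cuv eqxx.
Qed.

Section Positions.
Variables (V : finType) (key : V -> nat).

Definition position (v : V) : nat := #|[set u | key u < key v]|.

Lemma position_mono u v : key u < key v -> position u < position v.
Proof.
move=> lt_uv; apply: proper_card; apply/properP; split.
  by apply/subsetP => w; rewrite !inE => /ltn_trans; apply.
by exists u; rewrite !inE ?ltnn.
Qed.

Lemma position_lt_card v : position v < #|V|.
Proof.
apply: proper_card; apply/properP; split; first exact: subset_predT.
by exists v; rewrite !inE ?ltnn.
Qed.

End Positions.

Section ColourClassOrder.
Variables (V : finType) (t : nat) (c : V -> 'I_t).

Definition colour_key (v : V) : nat := c v * #|V| + enum_rank v.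

Lemma colour_key_inj : injective colour_key.
Proof.
move=> u v; rewrite /colour_key => /(congr1 (modn^~ #|V|)).
rewrite !modnMDl !modn_small ?ltn_ord // => /val_inj.
exact: enum_rank_inj.
Qed.

Lemma colour_key_mono u v : colour_key u < colour_key v -> c u <= c v.
Proof.
rewrite /colour_key leqNgt => lt_key; apply/negP => lt_c.
move: lt_key lt_c (ltn_ord (enum_rank v)).
move: (c u : nat) (c v : nat) (enum_rank u : nat) (enum_rank v : nat) => a b x y.
move: #|V| => n; nia.
Qed.

End ColourClassOrder.

Section ColourClassLabelling.
Variables (V : finType) (t : nat) (c : V -> 'I_t) (h k : nat).

(* Step k along the colour-class order, plus an extra h - k per colour change. *)
Definition colour_labelling (v : V) : nat :=
  k * position (colour_key c) v + (h - k) * c v.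

Local Notation f := colour_labelling.

Lemma colour_labelling_le v : f v <= k * (#|V| - 1) + (h - k) * (t - 1).
Proof.
have := position_lt_card (colour_key c) v; have := ltn_ord (c v).
by rewrite /f => ? ?; apply: leq_add; apply: leq_mul => //; lia.
Qed.

Hypothesis le_kh : k <= h.

Lemma colour_labelling_gap u v : colour_key c u < colour_key c v ->
  k <= distn (f u) (f v) /\ (c u != c v -> h <= distn (f u) (f v)).
Proof.
move=> lt_key; have lt_pos := position_mono lt_key.
have le_c := colour_key_mono lt_key; rewrite /f.
split=> [|ne_c]; apply: distn_ge; first nia.
have lt_c : c u < c v by rewrite ltn_neqAle le_c andbT.
by move: (position _ u) (position _ v) (c u : nat) (c v : nat) lt_pos lt_c; nia.
Qed.

Lemma colour_labelling_sep u v : u != v ->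
  k <= distn (f u) (f v) /\ (c u != c v -> h <= distn (f u) (f v)).
Proof.
move=> ne_uv; case: (ltngtP (colour_key c u) (colour_key c v)) => [|lt_vu|].
- exact: colour_labelling_gap.
- by rewrite distn_sym eq_sym; apply: colour_labelling_gap.
- by move/colour_key_inj/eqP; rewrite (negbTE ne_uv).
Qed.

Lemma colour_labelling_L_colouring (E : {set {set V}}) :
  strong_colouring E c -> L_colouring E h k f.
Proof.
move=> Sc; split=> u v ne_uv.
- move=> [e eE /andP [ue ve]].
  apply: (colour_labelling_sep ne_uv).2.
  exact: strong_colouring_separates Sc eE ue ve ne_uv.
- by move=> _; apply: (colour_labelling_sep ne_uv).1.
Qed.

End ColourClassLabelling.

Theorem theorem3p1 (V : finType) (E : {set {set V}}) (n k' : nat) :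
  0 < #|V| -> #|V| = n ->
  simple_hypergraph E ->
  strong_chromatic_number E k' ->
  forall h k : nat, k < h ->
  lambda_hk E h k <= k * (n - k') + (k' - 1) * h.
Proof.
move=> _ card_V _ chiH h k lt_kh.
have le_k'n : k' <= n by rewrite -card_V; apply: strong_chromatic_number_le_order chiH.
have [[c Sc] _] := chiH.
have Lf := colour_labelling_L_colouring (ltnW lt_kh) Sc.
apply: leq_trans (lambda_hk_le_span Lf) _.
apply: leq_trans (span_le_max (colour_labelling_le c h k)) _.
rewrite card_V; nia.
Qed.
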